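(* Let $q=p^{m_0}$ with $p$ prime, let $\rho$ be a permutation of $\{0,1,2,\ldots\}$, let $\mathcal O=\mathbb{F}_q[[\pi]]\subset k_\infty=\mathbb{F}_q((\pi))$, let $U$ be the group of units of $\mathcal O$ and $U_1\subseteq U$ the units congruent to $1$ modulo $\pi$. Then, as sets, each of $\mathcal O$, $U$ and $U_1$ is mapped into itself by $\rho_\ast$.
   Context: For $y\in\mathbb{Z}_p$ written $q$-adically as $y=\sum_{j\ge0}c_jq^j$ with $0\le c_j<q$, set $\rho_\ast y:=\sum_{j\ge0}c_jq^{\rho(j)}$; this bijection of $\mathbb{Z}_p$ stabilizes both the nonnegative and the nonpositive integers (negative integers being regarded as elements of $\mathbb{Z}_p$). For $x=\sum_{j\gg-\infty}c_j\pi^j\in k_\infty$ with $c_j\in\mathbb{F}_q$, define $\rho_\ast x:=\sum_{j}c_j\pi^{\rho_\ast j}$; this is a continuous $\mathbb{F}_q$-linear automorphism of $k_\infty$. *)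

From HB Require Import structures.
From mathcomp Require Import all_boot all_order all_algebra.
From Stdlib Require Import ClassicalEpsilon.
Set Implicit Arguments. Unset Strict Implicit. Unset Printing Implicit Defensive.
Import Order.TTheory GRing.Theory Num.Theory.
Local Open Scope ring_scope.

(* Elements of k_oo = F_q((pi)) are represented by their coefficient
   functions c : int -> F (c j is the coefficient of pi^j); genuine Laurent
   series are those with support bounded below. *)
Definition laurent (F : finFieldType) (x : int -> F) : Prop :=
  exists N : int, forall j : int, j < N -> x j = 0.

(* The i-th q-adic digit of an integer z, regarded as an element of Z_p
   (q = p^m0): floor((z mod q^(i+1)) / q^i), with nonnegative remainder. *)
Definition qdigit (q : nat) (z : int) (i : nat) : int :=
  ((z %% (q ^ i.+1)%N%:Z)%Z %/ (q ^ i)%N%:Z)%Z.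

Definition rho_star_int (q : nat) (rho : nat -> nat) (j k : int) : Prop :=
  forall i : nat, qdigit q k (rho i) = qdigit q j i.

(* rho_* x = sum_j c_j pi^(rho_* j): the coefficient at k is c_j for the
   (unique, rho_* being a bijection of Z) j with rho_* j = k. *)
Definition rho_star (F : finFieldType) (q : nat) (rho : nat -> nat)
    (x : int -> F) (k : int) : F :=
  match excluded_middle_informative (exists j, rho_star_int q rho j k) with
  | left H => x (proj1_sig (constructive_indefinite_description _ H))
  | right _ => 0
  end.

Definition inO (F : finFieldType) (x : int -> F) : Prop :=
  forall j : int, j < 0 -> x j = 0.

Definition O_mul_coef (F : finFieldType) (x y : int -> F) (n : nat) : F :=
  \sum_(i < n.+1) x (Posz i) * y (Posz (n - i)%N).

Definition inU (F : finFieldType) (x : int -> F) : Prop :=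
  inO x /\ exists y : int -> F, inO y /\
    forall n : nat, O_mul_coef x y n = (n == 0%N)%:R.

Definition inU1 (F : finFieldType) (x : int -> F) : Prop :=
  inU x /\ forall j : int, j <= 0 -> x j - (j == 0)%:R = 0.

From HB Require Import structures.
From mathcomp Require Import all_boot all_order all_algebra.
From Stdlib Require Import ClassicalEpsilon.
From mathcomp Require Import zify.
Set Implicit Arguments. Unset Strict Implicit. Unset Printing Implicit Defensive.
Import Order.TTheory GRing.Theory Num.Theory.
Local Open Scope ring_scope.

(* A nonnegative integer has q-adic digits that are eventually 0, a negative
   one has digits eventually q - 1, and 0 is the only integer all of whose
   digits vanish.  Since rho is injective, rho i is eventually large, so
   rho_* sends nonnegative integers to nonnegative ones and fixes 0.  Hence
   the coefficients of rho_* x in negative degree vanish when x lies in O,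
   and its constant coefficient is that of x.  Membership in O, U and U_1
   only depends on these coefficients: an element of O is a unit exactly
   when its constant coefficient is nonzero (the inverse being computed
   recursively). *)

Section Digits.
Variable q : nat.
Hypothesis q_gt1 : (1 < q)%N.

Lemma qdigit_nat (m : nat) (i : nat) :
  qdigit q m i = ((m %% q ^ i.+1) %/ q ^ i)%N.
Proof. by rewrite /qdigit modz_nat divz_nat. Qed.

Lemma qdigit0 (i : nat) : qdigit q 0 i = 0.
Proof. by rewrite (qdigit_nat 0) mod0n div0n. Qed.

Lemma qdigit_nat_small (m i : nat) : (m < q ^ i)%N -> qdigit q m i = 0.
Proof.
move=> m_lt; rewrite qdigit_nat modn_small ?divn_small //.
by rewrite (leq_trans m_lt) // leq_exp2l // ltnW.
Qed.

Lemma qdigit_Negz_small (m i : nat) :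
  (m < q ^ i)%N -> qdigit q (Negz m) i = q.-1.
Proof.
move=> m_lt; rewrite /qdigit.
have m_lt' : (m.+1 <= q ^ i.+1)%N.
  by rewrite expnS (leq_trans m_lt) // leq_pmull // ltnW.
have -> : (Negz m %% (q ^ i.+1)%N%:Z)%Z = (q ^ i.+1 - m.+1)%N.
  rewrite -modzDr NegzE addrC subzn // modz_small //.
  by rewrite lez_nat ltz_nat ltn_subrL /= (leq_ltn_trans (leq0n _) m_lt').
rewrite divz_nat; congr Posz.
have -> : (q ^ i.+1 - m.+1 = q.-1 * q ^ i + (q ^ i - m.+1))%N.
  rewrite expnS -{1}(prednK (ltnW q_gt1)) mulSn.
  move: m_lt; move: (q ^ i)%N (q.-1 * q ^ i)%N => Q K m_lt; lia.
rewrite divnMDl ?expn_gt0 ?(ltnW q_gt1) // divn_small ?addn0 //.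
by move: m_lt; move: (q ^ i)%N => Q m_lt; lia.
Qed.

Lemma exists_qdigit_neq0 (m : nat) : (0 < m)%N -> exists i, qdigit q m i != 0.
Proof.
move=> m_gt0; exists (trunc_log q m); rewrite qdigit_nat.
have /andP[le_m m_lt] := trunc_log_bounds q_gt1 m_gt0.
by rewrite modn_small // eqz_nat -lt0n divn_gt0 // expn_gt0 ltnW.
Qed.

End Digits.

Lemma injective_nat_unbounded (f : nat -> nat) (A B : nat) :
  injective f -> exists2 i, (A <= i)%N & (B <= f i)%N.
Proof.
move=> f_inj.
have [/hasP[i] | /hasPn f_small] := boolP (has (fun i => B <= f i)%N (iota A B.+1)).
  by move=> /[!mem_iota] /andP[le_Ai _] le_B; exists i.
have f_lt (k : 'I_B.+1) : (f (A + k) < B)%N.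
  by rewrite ltnNge f_small // mem_iota leq_addr ltn_add2l /=.
have : injective (fun k : 'I_B.+1 => Ordinal (f_lt k)).
  by move=> k l [/f_inj /addnI /val_inj].
by move/leq_card; rewrite !card_ord ltnn.
Qed.

Section RhoStar.
Variables (q : nat) (rho : nat -> nat).
Hypotheses (q_gt1 : (1 < q)%N) (rho_inj : injective rho).

Let pred_q_neq0 : q.-1%:Z != 0.
Proof. by rewrite eqz_nat -lt0n ltn_predRL. Qed.

Lemma rho_star_int_0 (j : int) : rho_star_int q rho j 0 -> j = 0.
Proof.
case: j => [[|m]|m] rho_j //.
  have [i /eqP []] := exists_qdigit_neq0 q_gt1 (ltn0Sn m).
  by rewrite -rho_j qdigit0.
move: (rho_j m); rewrite qdigit0 qdigit_Negz_small ?(ltn_expl _ q_gt1) //.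
by move=> /eqP; rewrite eq_sym (negPf pred_q_neq0).
Qed.

Lemma rho_star_int_neg (j k : int) : rho_star_int q rho j k -> k < 0 -> j < 0.
Proof.
case: k => [//|m'] + _; case: j => [m|//] rho_j.
have [i le_mi le_m'i] := injective_nat_unbounded m m' rho_inj.
have lt_exp n k : (n <= k)%N -> (n < q ^ k)%N.
  by move=> le_nk; rewrite (leq_ltn_trans le_nk) ?(ltn_expl _ q_gt1).
move: (rho_j i); rewrite qdigit_nat_small ?lt_exp // qdigit_Negz_small ?lt_exp //.
by move=> /eqP; rewrite (negPf pred_q_neq0).
Qed.

Variable F : finFieldType.

Lemma rho_star_coef0 (x : int -> F) : rho_star q rho x 0 = x 0.
Proof.
rewrite /rho_star; case: excluded_middle_informative => [ex|[]].
  by case: constructive_indefinite_description => j /= /rho_star_int_0 ->.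
by exists 0 => i; rewrite !qdigit0.
Qed.

Lemma inO_rho_star (x : int -> F) : inO x -> inO (rho_star q rho x).
Proof.
move=> xO k k_lt0; rewrite /rho_star; case: excluded_middle_informative => // ex.
case: constructive_indefinite_description => j /= rho_j.
exact/xO/(rho_star_int_neg rho_j).
Qed.

End RhoStar.

Section SeriesInverse.
Variables (F : finFieldType) (x : int -> F).

Fixpoint inv_series_prefix (n : nat) : seq F :=
  if n is n'.+1 then
    let s := inv_series_prefix n' in
    rcons s (- (x 0)^-1 * \sum_(i < n'.+1) x i.+1 * nth 0 s (n' - i))
  else [:: (x 0)^-1].

Lemma size_inv_series_prefix n : size (inv_series_prefix n) = n.+1.
Proof. by elim: n => //= n IHn; rewrite size_rcons IHn. Qed.

Lemma nth_inv_series_prefix n k : (k <= n)%N ->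
  nth 0 (inv_series_prefix n) k = nth 0 (inv_series_prefix k) k.
Proof.
elim: n => [|n IHn]; first by rewrite leqn0 => /eqP ->.
rewrite leq_eqVlt => /predU1P[-> //|lt_kn].
by rewrite /= nth_rcons size_inv_series_prefix lt_kn IHn.
Qed.

Definition inv_series (j : int) : F :=
  if j is Posz n then nth 0 (inv_series_prefix n) n else 0.

Lemma inv_seriesS n :
  inv_series n.+1 = - (x 0)^-1 * \sum_(i < n.+1) x i.+1 * inv_series (n - i)%N.
Proof.
rewrite /= nth_rcons size_inv_series_prefix ltnn eqxx; congr (_ * _).
by apply: eq_bigr => i _; rewrite nth_inv_series_prefix // leq_subr.
Qed.

Lemma inO_inv_series : inO inv_series.
Proof. by case. Qed.

Lemma O_mul_coef_inv_series : x 0 != 0 ->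
  forall n, O_mul_coef x inv_series n = (n == 0)%:R.
Proof.
move=> x0_neq0 [|n]; first by rewrite /O_mul_coef big_ord1 /= mulfV.
rewrite /O_mul_coef big_ord_recl subn0 inv_seriesS mulrA mulrN mulfV // mulN1r.
under [X in _ + X]eq_bigr do rewrite subSS.
exact: addNr.
Qed.

End SeriesInverse.

Section UnitsOfO.
Variable F : finFieldType.
Implicit Type x : int -> F.

Lemma inUE x : inU x <-> inO x /\ x 0 != 0.
Proof.
split=> [[xO [y [_ /(_ 0%N)]]] | [xO x0_neq0]].
  rewrite /O_mul_coef big_ord1 => xy0; split=> //.
  by apply: contra_eqN xy0 => /eqP ->; rewrite mul0r eq_sym oner_eq0.
split=> //; exists (inv_series x).
by split; [apply: inO_inv_series | apply: O_mul_coef_inv_series].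
Qed.

Lemma inU1E x : inU1 x <-> inO x /\ x 0 = 1.
Proof.
split=> [[/inUE[xO _] x_1] | [xO x0_1]].
  by split=> //; apply/eqP; rewrite -subr_eq0 (x_1 0).
split=> [|j]; first by apply/inUE; rewrite x0_1 oner_eq0.
rewrite le_eqVlt => /predU1P[-> | j_lt0]; first by rewrite x0_1 subrr.
by rewrite xO // (negPf (ltr0_neq0 j_lt0)) subrr.
Qed.

End UnitsOfO.

Theorem proposition7p10 (p m0 : nat) (F : finFieldType) (rho : nat -> nat)
  (hp : prime p) (hm0 : (0 < m0)%N) (hF : #|F| = (p ^ m0)%N)
  (hrho : bijective rho) :
  (forall x : int -> F, inO x -> inO (rho_star (p ^ m0)%N rho x)) /\
  (forall x : int -> F, inU x -> inU (rho_star (p ^ m0)%N rho x)) /\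
  (forall x : int -> F, inU1 x -> inU1 (rho_star (p ^ m0)%N rho x)).
Proof.
(* Only q > 1 matters. *)
have q_gt1 : (1 < p ^ m0)%N by rewrite -{1}(expn0 p) ltn_exp2l ?prime_gt1.
have rho_inj := bij_inj hrho.
have rhoO := inO_rho_star q_gt1 rho_inj.
have rho0 := rho_star_coef0 rho q_gt1.
split; [exact: rhoO | split=> x].
  by move=> /inUE[xO x0_neq0]; apply/inUE; rewrite rho0; split; first exact: rhoO.
by move=> /inU1E[xO x0_1]; apply/inU1E; rewrite rho0; split; first exact: rhoO.
Qed.
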